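(* Let $\varepsilon\in(0,1)$, let $z>1$ and let $m\ge 1$ be an integer. There is a deterministic streaming algorithm that receives numbers $x_1,x_2,\dots\in[0,1]$ one at a time, uses $\mathcal{O}(\log_{1/(1-\varepsilon)} z)$ space and $\mathcal{O}(1)$ time per arrival, and after the arrival of $x_q$ (for $q\ge m$) outputs either a number $v$ or ''No'', such that, writing $W_q=x_{q-m+1}x_{q-m+2}\cdots x_q$: if it outputs a number $v$ then $(1-\varepsilon)W_q\le v\le W_q$; and if it outputs ''No'' then $W_q\le (1-\varepsilon)/z$.
   Context: Space is measured in stored numbers/machine words; each input number is assumed exactly representable and multiplication/division of such numbers is exact and takes $\mathcal{O}(1)$ time. *)

From Stdlib Require Import Reals List.
Open Scope R_scope.

(* A unit-cost real RAM model for deterministic streaming algorithms.  *)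
(* Each instruction costs one time unit.  Space = the registers used:  *)
(* an algorithm has space bound sp if every register address it ever  *)
(* touches (in either bank, including indirect ones) is < sp.          *)

Inductive instr : Type :=
| RConst (d : nat) (c : R)
| RInput (d : nat)
| RCopy (d a : nat)
| RAdd (d a b : nat)
| RSub (d a b : nat)
| RMul (d a b : nat)
| RDiv (d a b : nat)              (* r[d] := r[a] / r[b]; crash if r[b]=0 *)
| RLoad (d p : nat)
| RStore (p a : nat)
| RJle (a b t : nat)
| NConst (d c : nat)
| NCopy (d a : nat)
| NAdd (d a b : nat)
| NSub (d a b : nat)              (* n[d] := n[a] - n[b] (truncated)    *)
| NLoad (d p : nat)
| NStore (p a : nat)
| NJle (a b t : nat)
| Jmp (t : nat)
| OutNum (a : nat)
| OutNo
| OutNone.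

Record mem : Type := Mem { rreg : nat -> R ; nreg : nat -> nat }.

Definition upd {A : Type} (f : nat -> A) (i : nat) (v : A) : nat -> A :=
  fun j => if Nat.eqb j i then v else f j.

Inductive result : Type := ResNum (v : R) | ResNo | ResNone.

Inductive outcome : Type :=
| Next (pc : nat) (M : mem)
| Halt (o : result) (M : mem).

Definition accessed (ins : instr) (M : mem) : list nat :=
  match ins with
  | RConst d _ => d :: nil
  | RInput d => d :: nil
  | RCopy d a => d :: a :: nil
  | RAdd d a b | RSub d a b | RMul d a b | RDiv d a b => d :: a :: b :: nil
  | RLoad d p => d :: p :: nreg M p :: nil
  | RStore p a => p :: a :: nreg M p :: nil
  | RJle a b _ => a :: b :: nil
  | NConst d _ => d :: nil
  | NCopy d a => d :: a :: nil
  | NAdd d a b | NSub d a b => d :: a :: b :: nil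
  | NLoad d p => d :: p :: nreg M p :: nil
  | NStore p a => p :: a :: nreg M p :: nil
  | NJle a b _ => a :: b :: nil
  | Jmp _ => nil
  | OutNum a => a :: nil
  | OutNo => nil
  | OutNone => nil
  end.

Definition setr (M : mem) (d : nat) (v : R) : mem := Mem (upd (rreg M) d v) (nreg M).
Definition setn (M : mem) (d : nat) (v : nat) : mem := Mem (rreg M) (upd (nreg M) d v).

(* one instruction; None = crash (division by zero) *)
Definition step (x : R) (ins : instr) (pc : nat) (M : mem) : option outcome :=
  let r := rreg M in let n := nreg M in
  match ins with
  | RConst d c => Some (Next (S pc) (setr M d c))
  | RInput d => Some (Next (S pc) (setr M d x))
  | RCopy d a => Some (Next (S pc) (setr M d (r a)))
  | RAdd d a b => Some (Next (S pc) (setr M d (r a + r b)))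
  | RSub d a b => Some (Next (S pc) (setr M d (r a - r b)))
  | RMul d a b => Some (Next (S pc) (setr M d (r a * r b)))
  | RDiv d a b =>
      if Req_EM_T (r b) 0 then None else Some (Next (S pc) (setr M d (r a / r b)))
  | RLoad d p => Some (Next (S pc) (setr M d (r (n p))))
  | RStore p a => Some (Next (S pc) (setr M (n p) (r a)))
  | RJle a b t => if Rle_dec (r a) (r b) then Some (Next t M) else Some (Next (S pc) M)
  | NConst d c => Some (Next (S pc) (setn M d c))
  | NCopy d a => Some (Next (S pc) (setn M d (n a)))
  | NAdd d a b => Some (Next (S pc) (setn M d (n a + n b)%nat))
  | NSub d a b => Some (Next (S pc) (setn M d (n a - n b)%nat))
  | NLoad d p => Some (Next (S pc) (setn M d (n (n p))))
  | NStore p a => Some (Next (S pc) (setn M (n p) (n a)))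
  | NJle a b t => if Nat.leb (n a) (n b) then Some (Next t M) else Some (Next (S pc) M)
  | Jmp t => Some (Next t M)
  | OutNum a => Some (Halt (ResNum (r a)) M)
  | OutNo => Some (Halt ResNo M)
  | OutNone => Some (Halt ResNone M)
  end.

(* None = did not halt within
   the time bound, exceeded the space bound, jumped outside P, or crashed. *)
Fixpoint exec (fuel sp : nat) (P : list instr) (x : R) (pc : nat) (M : mem)
  : option (result * mem) :=
  match fuel with
  | O => None
  | S f =>
      match nth_error P pc with
      | None => None
      | Some ins =>
          if forallb (fun a => Nat.ltb a sp) (accessed ins M) then
            match step x ins pc M with
            | Some (Next pc' M') => exec f sp P x pc' M'
            | Some (Halt o M') => Some (o, M')
            | None => None
            end
          else None
      end
  end.

Definition mem0 : mem := Mem (fun _ => 0) (fun _ => 0%nat).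

(* State/output after the first q arrivals xs 0, ..., xs (q-1)
   (i.e. x_1, ..., x_q in the paper's 1-based indexing). *)
Fixpoint run (T sp : nat) (P : list instr) (xs : nat -> R) (q : nat)
  : option (result * mem) :=
  match q with
  | O => Some (ResNone, mem0)
  | S k =>
      match run T sp P xs k with
      | Some (_, M) => exec T sp P (xs k) 0 M
      | None => None
      end
  end.

Fixpoint prodR (f : nat -> R) (a n : nat) : R :=
  match n with
  | O => 1
  | S k => prodR f a k * f (a + k)%nat
  end.

(* The algorithm keeps the running product Q(j) = x_Z ... x_(j-1) since the
   last zero input and a ring buffer of at most K checkpoints (t, Q(t)): a new
   checkpoint is recorded when Q drops below (1 - eps) times the last one,
   checkpoints that left the window are discarded, and the oldest one is
   evicted when the buffer is full.  If the oldest checkpoint t0 lies at or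
   before the window start s, the next one lies after s, so Q(s) is within a
   factor 1 - eps of Q(t0) and Q(q) / Q(t0) approximates W = Q(q) / Q(s).
   Otherwise either the window contains a zero, or the buffer is full and the
   window lies after t0, across K checkpoints that each lose a factor
   1 - eps, so W <= (1 - eps)^(K-1) <= (1 - eps) / z once K exceeds
   log_(1/(1-eps)) z + 1. *)

From Stdlib Require Import Reals List.
From Stdlib Require Import Lia Lra ZArith FunctionalExtensionality.
Open Scope R_scope.

Definition runs (sp : nat) (P : list instr) (x : R) (pc : nat) (M : mem)
    (pc' : nat) (M' : mem) (n : nat) : Prop :=
  forall f, exec (n + f) sp P x pc M = exec f sp P x pc' M'.

Lemma runs_refl sp P x pc M : runs sp P x pc M pc M 0.
Proof. intro f; reflexivity. Qed.

Lemma runs_trans sp P x pc1 M1 pc2 M2 pc3 M3 n1 n2 :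
  runs sp P x pc1 M1 pc2 M2 n1 -> runs sp P x pc2 M2 pc3 M3 n2 ->
  runs sp P x pc1 M1 pc3 M3 (n1 + n2).
Proof. intros H1 H2 f. rewrite <- Nat.add_assoc, H1, H2. reflexivity. Qed.

Lemma runs_mem_eq sp P x pc M pc' M1 M2 n :
  runs sp P x pc M pc' M1 n -> M1 = M2 -> runs sp P x pc M pc' M2 n.
Proof. intros H <-. exact H. Qed.

Lemma runs_step sp P x pc M ins pc' M' :
  nth_error P pc = Some ins ->
  forallb (fun a => Nat.ltb a sp) (accessed ins M) = true ->
  step x ins pc M = Some (Next pc' M') ->
  runs sp P x pc M pc' M' 1.
Proof. intros Hins Hsp Hstep f. simpl. rewrite Hins, Hsp, Hstep. reflexivity. Qed.

Lemma exec_halt f sp P x pc M ins o M' :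
  nth_error P pc = Some ins ->
  forallb (fun a => Nat.ltb a sp) (accessed ins M) = true ->
  step x ins pc M = Some (Halt o M') ->
  exec (S f) sp P x pc M = Some (o, M').
Proof. intros Hins Hsp Hstep. simpl. rewrite Hins, Hsp, Hstep. reflexivity. Qed.

(* Registers 0..7 are scratch; the ring buffer of K entries lives in 8..8+K-1. *)
Definition slot (K j : nat) : nat := 8 + j mod K.
Arguments slot : simpl never.

Lemma slot_ge K j : (8 <= slot K j)%nat.
Proof. unfold slot. lia. Qed.

Lemma slot_eqb_l K j a : (a < 8)%nat -> Nat.eqb (slot K j) a = false.
Proof. intros. apply Nat.eqb_neq. pose proof (slot_ge K j). lia. Qed.

Lemma slot_eqb_r K j a : (a < 8)%nat -> Nat.eqb a (slot K j) = false.
Proof. intros. apply Nat.eqb_neq. pose proof (slot_ge K j). lia. Qed.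

Section Slots.
Open Scope nat_scope.
Variable K : nat.
Hypothesis K_pos : 0 < K.

Lemma mod_add_lt a i : i < K ->
  (a + i) mod K = if a mod K + i <? K then a mod K + i else a mod K + i - K.
Proof.
  intros Hi. rewrite <- Nat.Div0.add_mod_idemp_l.
  pose proof (Nat.mod_upper_bound a K ltac:(lia)).
  destruct (Nat.ltb_spec (a mod K + i) K).
  - apply Nat.mod_small; lia.
  - symmetry. apply (Nat.mod_unique _ _ 1); lia.
Qed.

Lemma slot_lt j : slot K j < 8 + K.
Proof. unfold slot. pose proof (Nat.mod_upper_bound j K ltac:(lia)). lia. Qed.

Lemma slot_0 : slot K 0 = 8.
Proof. unfold slot. rewrite Nat.Div0.mod_0_l. lia. Qed.

Lemma slot_succ j :
  slot K (j + 1) = if 8 + K <=? slot K j + 1 then 8 else slot K j + 1.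
Proof.
  unfold slot. pose proof (Nat.mod_upper_bound j K ltac:(lia)).
  destruct (Nat.eq_dec K 1) as [->|HK1].
  - rewrite !Nat.mod_1_r. reflexivity.
  - rewrite (mod_add_lt j 1) by lia.
    destruct (Nat.ltb_spec (j mod K + 1) K), (Nat.leb_spec (8 + K) (8 + j mod K + 1)); lia.
Qed.

Lemma slot_inj a i j : i < K -> j < K -> slot K (a + i) = slot K (a + j) -> i = j.
Proof.
  intros Hi Hj H. unfold slot in H.
  rewrite (mod_add_lt a i), (mod_add_lt a j) in H by lia.
  pose proof (Nat.mod_upper_bound a K ltac:(lia)).
  destruct (Nat.ltb_spec (a mod K + i) K), (Nat.ltb_spec (a mod K + j) K); lia.
Qed.

Lemma slot_add_period a : slot K (a + K) = slot K a.
Proof.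
  unfold slot. rewrite <- Nat.Div0.add_mod_idemp_r, Nat.Div0.mod_same, Nat.add_0_r.
  reflexivity.
Qed.

End Slots.

Lemma prodR_add f a n p : prodR f a (n + p) = prodR f a n * prodR f (a + n) p.
Proof.
  induction p as [|p IH].
  - rewrite Nat.add_0_r. simpl. ring.
  - rewrite Nat.add_succ_r. simpl. rewrite IH, Nat.add_assoc. ring.
Qed.

Lemma prodR_ge0 f a n : (forall i, 0 <= f i) -> 0 <= prodR f a n.
Proof. intros H. induction n; simpl; [lra | apply Rmult_le_pos; auto]. Qed.

Lemma prodR_le1 f a n : (forall i, 0 <= f i <= 1) -> prodR f a n <= 1.
Proof.
  intros H. induction n as [|n IH]; simpl; [lra|].
  pose proof (prodR_ge0 f a n (fun i => proj1 (H i))). destruct (H (a + n)%nat).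
  rewrite <- (Rmult_1_r 1). apply Rmult_le_compat; lra.
Qed.

Lemma prodR_gt0 f a n : (forall i, (a <= i < a + n)%nat -> 0 < f i) -> 0 < prodR f a n.
Proof.
  intros H. induction n as [|n IH]; simpl; [lra|].
  apply Rmult_lt_0_compat; [apply IH; intros i Hi|]; apply H; lia.
Qed.

Lemma prodR_eq0 f a n i : (a <= i < a + n)%nat -> f i = 0 -> prodR f a n = 0.
Proof.
  intros Hi Hf. induction n as [|n IH]; [lia|]. simpl.
  destruct (Nat.eq_dec i (a + n)) as [<-|Hne]; [rewrite Hf | rewrite IH by lia]; ring.
Qed.

(* The product of [f] over the index range [a, j); the empty product when [j <= a]. *)
Definition prod_range (f : nat -> R) (a j : nat) : R := prodR f a (j - a).

Lemma prod_range_id f a : prod_range f a a = 1.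
Proof. unfold prod_range. rewrite Nat.sub_diag. reflexivity. Qed.

Lemma prod_range_S f a j : (a <= j)%nat -> prod_range f a (S j) = prod_range f a j * f j.
Proof.
  intros H. unfold prod_range. replace (S j - a)%nat with (S (j - a)) by lia. simpl.
  replace (a + (j - a))%nat with j by lia. reflexivity.
Qed.

Lemma prod_range_split f a s n :
  (a <= s)%nat -> prod_range f a (s + n) = prod_range f a s * prodR f s n.
Proof.
  intros H. unfold prod_range. replace (s + n - a)%nat with (s - a + n)%nat by lia.
  rewrite prodR_add. replace (a + (s - a))%nat with s by lia. reflexivity.
Qed.

Lemma prod_range_ge0 f a j : (forall i, 0 <= f i) -> 0 <= prod_range f a j.
Proof. apply prodR_ge0. Qed.

Lemma prod_range_gt0 f a j : (forall i, (a <= i < j)%nat -> 0 < f i) -> 0 < prod_range f a j.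
Proof. intros H. apply prodR_gt0. intros i Hi. apply H. lia. Qed.

Lemma prod_range_antimono f a j j' :
  (forall i, 0 <= f i <= 1) -> (a <= j <= j')%nat -> prod_range f a j' <= prod_range f a j.
Proof.
  intros H Hj. replace j' with (j + (j' - j))%nat by lia. rewrite prod_range_split by lia.
  pose proof (prodR_le1 f j (j' - j) H).
  pose proof (prod_range_ge0 f a j (fun i => proj1 (H i))).
  pose proof (prodR_ge0 f j (j' - j) (fun i => proj1 (H i))).
  nra.
Qed.

Lemma geometric_decay (g : nat -> R) c k :
  0 <= c -> (forall i, (i + 1 < k)%nat -> g (i + 1)%nat <= c * g i) ->
  forall i, (i < k)%nat -> g i <= c ^ i * g O.
Proof.
  intros Hc H. induction i as [|i IH]; intros Hi; simpl; [lra|].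
  rewrite <- Nat.add_1_r. specialize (H i ltac:(lia)). specialize (IH ltac:(lia)).
  rewrite Rmult_assoc. apply Rmult_le_compat_l with (r := c) in IH; lra.
Qed.

Lemma pow_le_inv_of_log c z N :
  0 < c < 1 -> 0 < z -> ln z / ln (1 / c) <= INR N -> c ^ N <= 1 / z.
Proof.
  intros Hc Hz HN.
  assert (HL : ln (1 / c) = - ln c) by (rewrite Rdiv_1_l; apply ln_Rinv; lra).
  assert (Hlc : ln c < 0) by (rewrite <- ln_1; apply ln_increasing; lra).
  rewrite HL in HN.
  assert (Hk : INR N * ln c <= - ln z).
  { apply Rmult_le_compat_r with (r := - ln c) in HN; [|lra].
    replace (ln z / - ln c * - ln c) with (ln z) in HN by (field; lra). lra. }
  rewrite <- (exp_ln (c ^ N)), ln_pow by (try apply pow_lt; lra).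
  replace (1 / z) with (exp (- ln z)) by (rewrite exp_Ropp, exp_ln by lra; field; lra).
  destruct (Rle_lt_or_eq_dec _ _ Hk) as [Hlt|Heq]; [left; apply exp_increasing | rewrite Heq]; lra.
Qed.

(* Register map: n0 = number q of arrivals so far, n1/n2 = slots of the head
   and tail entry, n3 = number k of entries, n4..n7 and r1..r3 = scratch,
   r0 = product of the inputs since the last zero.  An entry stores its
   arrival time in n[slot] and that running product in r[slot].  n1 = 0 only
   before the first arrival.  Labels on the left are program counters. *)
Definition window_prog (c : R) (m K : nat) : list instr :=
 (* 0 *) NConst 4 0 :: NJle 1 4 59 ::
 (* 2 *) RInput 1 :: NConst 4 1 :: NAdd 0 0 4 :: RConst 2 0 :: RJle 1 2 52 ::
 (* 7 *) RMul 0 0 1 :: RLoad 2 2 :: RConst 3 c :: RMul 2 2 3 :: RJle 2 0 29 ::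
 (* 12 *) NConst 5 1 :: NConst 4 K :: NJle 4 3 17 :: NAdd 3 3 5 :: Jmp 22 ::
 (* 17 *) NAdd 1 1 5 :: NConst 6 (8+K) :: NJle 6 1 21 :: Jmp 22 :: NConst 1 8 ::
 (* 22 *) NAdd 2 2 5 :: NConst 6 (8+K) :: NJle 6 2 26 :: Jmp 27 :: NConst 2 8 ::
 (* 27 *) NStore 2 0 :: RStore 2 0 ::
 (* 29 *) NConst 5 1 :: NJle 3 5 44 :: NCopy 4 1 ::
 (* 32 *) NAdd 4 4 5 :: NConst 6 (8+K) :: NJle 6 4 36 :: Jmp 37 :: NConst 4 8 ::
 (* 37 *) NLoad 6 4 :: NConst 7 m :: NAdd 6 6 7 :: NJle 6 0 42 :: Jmp 44 ::
 (* 42 *) NCopy 1 4 :: NSub 3 3 5 ::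
 (* 44 *) NLoad 4 1 :: NConst 7 m :: NAdd 4 4 7 :: NJle 4 0 49 :: OutNo ::
 (* 49 *) RLoad 2 1 :: RDiv 3 0 2 :: OutNum 3 ::
 (* 52 *) NConst 1 8 :: NConst 2 8 :: NConst 3 1 :: NCopy 8 0 :: RConst 8 1 :: RConst 0 1 :: Jmp 44 ::
 (* 59 *) NConst 1 8 :: NConst 2 8 :: NConst 3 1 :: NConst 8 0 :: RConst 8 1 :: RConst 0 1 :: Jmp 2 :: nil.

Definition answer_ok (c bound : R) (xs : nat -> R) (q m : nat) (o : result) : Prop :=
  match o with
  | ResNum v => c * prodR xs (q - m) m <= v /\ v <= prodR xs (q - m) m
  | ResNo => prodR xs (q - m) m <= bound
  | ResNone => False
  end.

Lemma answer_ok_weaken c b b' xs q m o :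
  b <= b' -> answer_ok c b xs q m o -> answer_ok c b' xs q m o.
Proof. intros Hb. destruct o; cbn; lra. Qed.

Lemma strict_mono_of_succ (g : nat -> nat) k : (forall i, (i + 1 < k)%nat -> (g i < g (i + 1))%nat) ->
  forall i j, (i < j < k)%nat -> (g i < g j)%nat.
Proof.
  intros H i j. induction j as [|j IH]; intros Hij; [lia|].
  specialize (H j ltac:(lia)). rewrite Nat.add_1_r in H.
  destruct (Nat.eq_dec i j) as [->|Hne]; [exact H|]. specialize (IH ltac:(lia)). lia.
Qed.

Section Invariant.
Variables (c : R) (m K : nat) (xs : nat -> R).

Definition entry_time (M : mem) (hl i : nat) : nat := nreg M (slot K (hl + i)).
Definition entry_val (M : mem) (hl i : nat) : R := rreg M (slot K (hl + i)).

(* [hl] is the unreduced ring-buffer index of the head entry, [k] the number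
   of entries and [Z] the first arrival after the last zero input, so the
   running product is [prod_range xs Z q].  In a [settled] state only the head
   entry may lie before the current window. *)
Set Implicit Arguments.
Record window_inv (settled : bool) (q : nat) (M : mem) (hl k Z : nat) : Prop := {
  wi_clock : nreg M 0 = q;
  wi_head : nreg M 1 = slot K hl;
  wi_tail : nreg M 2 = slot K (hl + (k - 1));
  wi_size : nreg M 3 = k;
  wi_size_range : (1 <= k <= K)%nat;
  wi_reset_le : (Z <= q)%nat;
  wi_reset_zero : Z = O \/ xs (Z - 1)%nat = 0;
  wi_reset_pos : forall i, (Z <= i < q)%nat -> 0 < xs i;
  wi_running : rreg M 0 = prod_range xs Z q;
  wi_time_range : forall i, (i < k)%nat -> (Z <= entry_time M hl i <= q)%nat;
  wi_val : forall i, (i < k)%nat -> entry_val M hl i = prod_range xs Z (entry_time M hl i);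
  wi_time_lt : forall i, (i + 1 < k)%nat -> (entry_time M hl i < entry_time M hl (i + 1))%nat;
  wi_val_drop : forall i, (i + 1 < k)%nat ->
    prod_range xs Z (entry_time M hl (i + 1)) < c * prod_range xs Z (entry_time M hl i);
  wi_between : forall i j, (i + 1 < k)%nat ->
    (entry_time M hl i <= j < entry_time M hl (i + 1))%nat ->
    c * prod_range xs Z (entry_time M hl i) <= prod_range xs Z j;
  wi_after_last : forall j, (entry_time M hl (k - 1) <= j <= q)%nat ->
    c * prod_range xs Z (entry_time M hl (k - 1)) <= prod_range xs Z j;
  wi_recent : forall i, (1 <= i < k)%nat ->
    if settled then (q < entry_time M hl i + m)%nat else (q <= entry_time M hl i + m)%nat;
  wi_head_recent : (q < entry_time M hl 0 + m)%nat -> entry_time M hl 0 = Z \/ k = K }.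
Unset Implicit Arguments.

Definition window_state (settled : bool) (q : nat) (M : mem) : Prop :=
  exists hl k Z, window_inv settled q M hl k Z.

Lemma window_inv_frame s q M M' hl k Z :
  window_inv s q M hl k Z ->
  (forall a, (a <= 3 \/ 8 <= a)%nat -> nreg M' a = nreg M a) ->
  (forall a, (a = 0 \/ 8 <= a)%nat -> rreg M' a = rreg M a) ->
  window_inv s q M' hl k Z.
Proof.
  intros HI Hn Hr.
  assert (Ht : forall h, entry_time M' h = entry_time M h).
  { intros h. extensionality i. unfold entry_time. apply Hn. right. apply slot_ge. }
  assert (Hv : forall h, entry_val M' h = entry_val M h).
  { intros h. extensionality i. unfold entry_val. apply Hr. right. apply slot_ge. }
  destruct HI; split; rewrite ?Ht, ?Hv, ?Hn, ?Hr by lia; assumption.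
Qed.

Lemma window_state_frame s q M M' :
  window_state s q M ->
  (forall a, (a <= 3 \/ 8 <= a)%nat -> nreg M' a = nreg M a) ->
  (forall a, (a = 0 \/ 8 <= a)%nat -> rreg M' a = rreg M a) ->
  window_state s q M'.
Proof. intros (hl & k & Z & HI) Hn Hr. exists hl, k, Z. eapply window_inv_frame; eauto. Qed.

Lemma window_inv_restart q M :
  0 < c < 1 -> (0 < K)%nat -> q = O \/ xs (q - 1)%nat = 0 ->
  nreg M 0 = q -> nreg M 1 = 8%nat -> nreg M 2 = 8%nat -> nreg M 3 = 1%nat ->
  nreg M 8 = q -> rreg M 8 = 1 -> rreg M 0 = 1 ->
  window_inv true q M 0 1 q.
Proof.
  intros Hc HK Hq N0 N1 N2 N3 N8 R8 R0.
  assert (Ht : entry_time M 0 0 = q) by (unfold entry_time; rewrite slot_0; assumption).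
  split; cbn [Nat.sub Nat.add]; rewrite ?slot_0, ?Ht; try lia; try assumption.
  - rewrite R0. symmetry. apply prod_range_id.
  - intros i Hi. replace i with O by lia. lia.
  - intros i Hi. replace i with O by lia.
    unfold entry_val. rewrite slot_0, R8, Ht by exact HK. symmetry. apply prod_range_id.
  - intros j Hj. replace j with q by lia. rewrite prod_range_id. lra.
Qed.

End Invariant.

Section Transitions.
Variables (c : R) (m K : nat) (xs : nat -> R).
Hypothesis c_range : 0 < c < 1.
Hypothesis xs_range : forall i, 0 <= xs i <= 1.

Local Notation inv := (window_inv c m K xs).

Lemma window_inv_settle q M hl k Z :
  inv false q M hl k Z -> k = 1%nat \/ (2 <= k)%nat /\ (q < entry_time K M hl 1 + m)%nat ->
  inv true q M hl k Z.
Proof.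
  intros HI Hk. destruct HI; split; try assumption.
  intros i Hi. destruct Hk as [->|[Hk Hq]]; [lia|].
  destruct (Nat.eq_dec i 1) as [->|Hi1]; [exact Hq|].
  pose proof (strict_mono_of_succ _ k wi_time_lt0 1 i ltac:(lia)). lia.
Qed.

Lemma window_inv_pop q M M' hl k Z :
  inv false q M hl k Z -> (2 <= k)%nat -> (entry_time K M hl 1 + m <= q)%nat ->
  nreg M' 0 = nreg M 0 -> nreg M' 1 = slot K (hl + 1) -> nreg M' 2 = nreg M 2 ->
  nreg M' 3 = (k - 1)%nat -> rreg M' 0 = rreg M 0 ->
  (forall a, (8 <= a)%nat -> nreg M' a = nreg M a /\ rreg M' a = rreg M a) ->
  inv true q M' (hl + 1) (k - 1) Z.
Proof.
  intros HI Hk Hexp N0 N1 N2 N3 R0 N8.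
  assert (Ht : entry_time K M' (hl + 1) = fun i => entry_time K M hl (i + 1)).
  { extensionality i. unfold entry_time. rewrite (proj1 (N8 _ (slot_ge K _))).
    f_equal. f_equal. lia. }
  assert (Hv : entry_val K M' (hl + 1) = fun i => entry_val K M hl (i + 1)).
  { extensionality i. unfold entry_val. rewrite (proj2 (N8 _ (slot_ge K _))).
    f_equal. f_equal. lia. }
  destruct HI; split; rewrite ?Ht, ?Hv, ?N0, ?N1, ?N2, ?N3, ?R0;
    try first [reflexivity | assumption | lia].
  - rewrite wi_tail0. f_equal. lia.
  - intros i Hi. apply wi_time_range0. lia.
  - intros i Hi. apply wi_val0. lia.
  - intros i Hi. apply wi_time_lt0. lia.
  - intros i Hi. apply wi_val_drop0. lia.
  - intros i j Hi. apply wi_between0. lia.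
  - replace (k - 1 - 1 + 1)%nat with (k - 1)%nat by lia. exact wi_after_last0.
  - intros i Hi. specialize (wi_recent0 1%nat ltac:(lia)). cbn in wi_recent0.
    pose proof (strict_mono_of_succ _ k wi_time_lt0 1 (i + 1) ltac:(lia)). lia.
  - intros Hq. cbn in Hq. lia.
Qed.

Lemma window_inv_absorb q M M' hl k Z :
  0 < xs q -> inv true q M hl k Z ->
  nreg M' 0 = S q -> nreg M' 1 = nreg M 1 -> nreg M' 2 = nreg M 2 -> nreg M' 3 = nreg M 3 ->
  rreg M' 0 = rreg M 0 * xs q ->
  (forall a, (8 <= a)%nat -> nreg M' a = nreg M a /\ rreg M' a = rreg M a) ->
  entry_val K M hl (k - 1) * c <= rreg M 0 * xs q ->
  inv false (S q) M' hl k Z.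
Proof.
  intros Hx HI N0 N1 N2 N3 R0 N8 Hstay.
  assert (Ht : entry_time K M' hl = entry_time K M hl).
  { extensionality i. apply (N8 _ (slot_ge K _)). }
  assert (Hv : entry_val K M' hl = entry_val K M hl).
  { extensionality i. apply (N8 _ (slot_ge K _)). }
  destruct HI.
  assert (HQ : prod_range xs Z (S q) = rreg M 0 * xs q).
  { rewrite prod_range_S, wi_running0 by lia. reflexivity. }
  split; rewrite ?Ht, ?Hv, ?N0, ?N1, ?N2, ?N3, ?R0, ?HQ;
    try first [reflexivity | assumption | lia].
  - intros i Hi. destruct (Nat.eq_dec i q) as [->|Hne]; [exact Hx|]. apply wi_reset_pos0. lia.
  - intros i Hi. specialize (wi_time_range0 i Hi). lia.
  - intros j Hj. destruct (Nat.eq_dec j (S q)) as [->|Hne].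
    + rewrite HQ, <- wi_val0 by lia. lra.
    + apply wi_after_last0. lia.
Qed.

Lemma window_inv_push q M M' hl k Z :
  0 < xs q -> (k < K)%nat -> inv true q M hl k Z ->
  nreg M' 0 = S q -> nreg M' 1 = nreg M 1 -> nreg M' 2 = slot K (hl + k) -> nreg M' 3 = S k ->
  rreg M' 0 = rreg M 0 * xs q ->
  nreg M' (slot K (hl + k)) = S q -> rreg M' (slot K (hl + k)) = rreg M 0 * xs q ->
  (forall a, (8 <= a)%nat -> a <> slot K (hl + k) -> nreg M' a = nreg M a /\ rreg M' a = rreg M a) ->
  rreg M 0 * xs q < entry_val K M hl (k - 1) * c ->
  inv false (S q) M' hl (S k) Z.
Proof.
  intros Hx HkK HI N0 N1 N2 N3 R0 Nnew Rnew N8 Hdrop.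
  assert (Hold : forall i, (i < k)%nat ->
    entry_time K M' hl i = entry_time K M hl i /\ entry_val K M' hl i = entry_val K M hl i).
  { intros i Hi. apply N8; [apply slot_ge|]. intro Heq. apply slot_inj in Heq; lia. }
  destruct HI.
  assert (HQ : prod_range xs Z (S q) = rreg M 0 * xs q).
  { rewrite prod_range_S, wi_running0 by lia. reflexivity. }
  assert (HQ0 : 0 <= prod_range xs Z (S q)) by (apply prod_range_ge0; apply xs_range).
  assert (Ht : entry_time K M' hl k = S q) by exact Nnew.
  assert (Hv : entry_val K M' hl k = prod_range xs Z (S q)) by (rewrite HQ; exact Rnew).
  split; rewrite ?N0, ?N1, ?N2, ?N3, ?R0; try first [reflexivity | assumption | lia].
  - f_equal. lia.
  - intros i Hi. destruct (Nat.eq_dec i q) as [->|Hne]; [exact Hx|]. apply wi_reset_pos0. lia.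
  - symmetry. exact HQ.
  - intros i Hi. destruct (Nat.eq_dec i k) as [->|Hne]; [lia|].
    rewrite (proj1 (Hold i ltac:(lia))). specialize (wi_time_range0 i ltac:(lia)). lia.
  - intros i Hi. destruct (Nat.eq_dec i k) as [->|Hne]; [rewrite Ht; exact Hv|].
    destruct (Hold i ltac:(lia)) as [-> ->]. apply wi_val0. lia.
  - intros i Hi. rewrite (proj1 (Hold i ltac:(lia))).
    destruct (Nat.eq_dec (i + 1) k) as [<-|Hne].
    + rewrite Ht. specialize (wi_time_range0 i ltac:(lia)). lia.
    + rewrite (proj1 (Hold (i + 1)%nat ltac:(lia))). apply wi_time_lt0. lia.
  - intros i Hi. rewrite (proj1 (Hold i ltac:(lia))).
    destruct (Nat.eq_dec (i + 1) k) as [<-|Hne].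
    + rewrite Ht, HQ, Nat.add_sub, <- wi_val0 in * by lia. lra.
    + rewrite (proj1 (Hold (i + 1)%nat ltac:(lia))). apply wi_val_drop0. lia.
  - intros i j Hi. rewrite (proj1 (Hold i ltac:(lia))).
    destruct (Nat.eq_dec (i + 1) k) as [<-|Hne].
    + rewrite Ht. intros Hj. rewrite Nat.add_sub in wi_after_last0. apply wi_after_last0. lia.
    + rewrite (proj1 (Hold (i + 1)%nat ltac:(lia))). apply wi_between0. lia.
  - rewrite Nat.sub_succ, Nat.sub_0_r, Ht. intros j Hj. replace j with (S q) by lia. nra.
  - intros i Hi. destruct (Nat.eq_dec i k) as [->|Hne]; [lia|].
    rewrite (proj1 (Hold i ltac:(lia))). specialize (wi_recent0 i ltac:(lia)). lia.
  - rewrite (proj1 (Hold 0%nat ltac:(lia))). intros Hq. destruct wi_head_recent0; lia.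
Qed.

Lemma window_inv_push_evict q M M' hl Z :
  0 < xs q -> (2 <= K)%nat -> inv true q M hl K Z ->
  nreg M' 0 = S q -> nreg M' 1 = slot K (hl + 1) -> nreg M' 2 = slot K (hl + K) -> nreg M' 3 = K ->
  rreg M' 0 = rreg M 0 * xs q ->
  nreg M' (slot K (hl + K)) = S q -> rreg M' (slot K (hl + K)) = rreg M 0 * xs q ->
  (forall a, (8 <= a)%nat -> a <> slot K (hl + K) -> nreg M' a = nreg M a /\ rreg M' a = rreg M a) ->
  rreg M 0 * xs q < entry_val K M hl (K - 1) * c ->
  inv false (S q) M' (hl + 1) K Z.
Proof.
  intros Hx HK HI N0 N1 N2 N3 R0 Nnew Rnew N8 Hdrop.
  assert (Hold : forall i, (i + 1 < K)%nat ->
    entry_time K M' (hl + 1) i = entry_time K M hl (i + 1) /\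
    entry_val K M' (hl + 1) i = entry_val K M hl (i + 1)).
  { intros i Hi. unfold entry_time, entry_val. rewrite <- Nat.add_assoc, (Nat.add_comm 1 i).
    apply N8; [apply slot_ge|]. intro Heq.
    rewrite slot_add_period in Heq by lia. rewrite <- (Nat.add_0_r hl) in Heq at 2.
    apply slot_inj in Heq; lia. }
  destruct HI.
  assert (HQ : prod_range xs Z (S q) = rreg M 0 * xs q).
  { rewrite prod_range_S, wi_running0 by lia. reflexivity. }
  assert (HQ0 : 0 <= prod_range xs Z (S q)) by (apply prod_range_ge0; apply xs_range).
  assert (Hnew : (hl + 1 + (K - 1) = hl + K)%nat) by lia.
  assert (Ht : entry_time K M' (hl + 1) (K - 1) = S q) by (unfold entry_time; rewrite Hnew; exact Nnew).
  assert (Hv : entry_val K M' (hl + 1) (K - 1) = prod_range xs Z (S q))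
    by (unfold entry_val; rewrite Hnew, HQ; exact Rnew).
  split; rewrite ?N0, ?N1, ?N2, ?N3, ?R0; try first [reflexivity | assumption | lia].
  - f_equal. lia.
  - intros i Hi. destruct (Nat.eq_dec i q) as [->|Hne]; [exact Hx|]. apply wi_reset_pos0. lia.
  - symmetry. exact HQ.
  - intros i Hi. destruct (Nat.eq_dec i (K - 1)) as [->|Hne]; [lia|].
    rewrite (proj1 (Hold i ltac:(lia))). specialize (wi_time_range0 (i + 1)%nat ltac:(lia)). lia.
  - intros i Hi. destruct (Nat.eq_dec i (K - 1)) as [->|Hne]; [rewrite Ht; exact Hv|].
    destruct (Hold i ltac:(lia)) as [-> ->]. apply wi_val0. lia.
  - intros i Hi. rewrite (proj1 (Hold i ltac:(lia))).
    destruct (Nat.eq_dec (i + 1) (K - 1)) as [Hik|Hne].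
    + rewrite Hik, Ht. specialize (wi_time_range0 (K - 1)%nat ltac:(lia)). lia.
    + rewrite (proj1 (Hold (i + 1)%nat ltac:(lia))). apply wi_time_lt0. lia.
  - intros i Hi. rewrite (proj1 (Hold i ltac:(lia))).
    destruct (Nat.eq_dec (i + 1) (K - 1)) as [Hik|Hne].
    + rewrite Hik, Ht, HQ, <- wi_val0 by lia. lra.
    + rewrite (proj1 (Hold (i + 1)%nat ltac:(lia))). apply wi_val_drop0. lia.
  - intros i j Hi. rewrite (proj1 (Hold i ltac:(lia))).
    destruct (Nat.eq_dec (i + 1) (K - 1)) as [Hik|Hne].
    + rewrite Hik, Ht. intros Hj. apply wi_after_last0. lia.
    + rewrite (proj1 (Hold (i + 1)%nat ltac:(lia))). apply wi_between0. lia.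
  - rewrite Ht. intros j Hj. replace j with (S q) by lia. nra.
  - intros i Hi. destruct (Nat.eq_dec i (K - 1)) as [->|Hne]; [lia|].
    rewrite (proj1 (Hold i ltac:(lia))). specialize (wi_recent0 (i + 1)%nat ltac:(lia)). lia.
Qed.
End Transitions.

Section Estimates.
Variables (c : R) (m K : nat) (xs : nat -> R).
Hypothesis c_range : 0 < c < 1.
Hypothesis xs_range : forall i, 0 <= xs i <= 1.

Local Notation inv := (window_inv c m K xs).

(* Write [Q := prod_range xs Z] and [s := q - m].  The head entry is at or
   before [s], and [s] is before the second entry (which is recent) or after
   the last one, so [Q s] is within a factor [c] of the head value; the
   window product is [Q q / Q s]. *)
Lemma window_estimate q M hl k Z :
  inv true q M hl k Z -> (entry_time K M hl 0 + m <= q)%nat ->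
  c * prodR xs (q - m) m <= rreg M 0 / entry_val K M hl 0 <= prodR xs (q - m) m.
Proof.
  intros HI Hold. destruct HI.
  set (s := (q - m)%nat).
  specialize (wi_time_range0 0%nat ltac:(lia)).
  rewrite wi_running0, wi_val0 by lia.
  assert (HW : prod_range xs Z q = prod_range xs Z s * prodR xs s m).
  { replace q with (s + m)%nat at 1 by (unfold s; lia). apply prod_range_split. lia. }
  assert (Ht0 : 0 < prod_range xs Z (entry_time K M hl 0)).
  { apply prod_range_gt0. intros i Hi. apply wi_reset_pos0. lia. }
  assert (Hs_le : prod_range xs Z s <= prod_range xs Z (entry_time K M hl 0)).
  { apply prod_range_antimono; [exact xs_range | lia]. }
  assert (Hs_ge : c * prod_range xs Z (entry_time K M hl 0) <= prod_range xs Z s).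
  { destruct (Nat.eq_dec k 1) as [->|Hk1].
    - apply wi_after_last0. cbn. unfold s. lia.
    - apply wi_between0; [lia|]. specialize (wi_recent0 1%nat ltac:(lia)). cbn. unfold s. lia. }
  pose proof (prodR_ge0 xs s m (fun i => proj1 (xs_range i))).
  rewrite HW. set (a := prod_range xs Z s) in *.
  set (b := prod_range xs Z (entry_time K M hl 0)) in *. set (w := prodR xs s m) in *.
  replace (a * w / b) with (w * a * / b) by (field; lra).
  split; apply (Rmult_le_reg_r b); try lra;
    replace (w * a * / b * b) with (w * a) by (field; lra); nra.
Qed.

(* Either the window contains the last zero input, or the buffer is full and
   the window lies within the span from the head to the present, over which
   the running product dropped by a factor below [c ^ (K - 1)]. *)
Lemma window_small q M hl k Z :
  inv true q M hl k Z -> (m <= q)%nat -> (q < entry_time K M hl 0 + m)%nat ->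
  prodR xs (q - m) m <= c ^ (K - 1).
Proof.
  intros HI Hmq Hrecent. destruct HI.
  set (s := (q - m)%nat).
  assert (Hc : 0 <= c ^ (K - 1)) by (apply pow_le; lra).
  destruct (Nat.lt_ge_cases s Z) as [HsZ|HsZ].
  { destruct wi_reset_zero0 as [HZ0|HZ0]; [lia|].
    rewrite (prodR_eq0 xs s m (Z - 1)); [exact Hc | unfold s; lia | exact HZ0]. }
  destruct (wi_head_recent0 Hrecent) as [HZ|HkK]; [unfold s in HsZ; lia|]. rewrite HkK in *.
  assert (HW : prod_range xs Z q = prod_range xs Z s * prodR xs s m).
  { replace q with (s + m)%nat at 1 by (unfold s; lia). apply prod_range_split. lia. }
  assert (Hs_pos : 0 < prod_range xs Z s).
  { apply prod_range_gt0. intros i Hi. apply wi_reset_pos0. unfold s in Hi. lia. }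
  assert (Hs_le : prod_range xs Z (entry_time K M hl 0) <= prod_range xs Z s).
  { apply prod_range_antimono; [exact xs_range | unfold s; lia]. }
  pose proof (geometric_decay (fun i => prod_range xs Z (entry_time K M hl i)) c K
    ltac:(lra) (fun i Hi => Rlt_le _ _ (wi_val_drop0 i Hi)) (K - 1)%nat ltac:(lia)) as Hdecay.
  cbn beta in Hdecay.
  assert (Hq_le : prod_range xs Z q <= prod_range xs Z (entry_time K M hl (K - 1))).
  { apply prod_range_antimono; [exact xs_range | specialize (wi_time_range0 (K - 1)%nat); lia]. }
  pose proof (prodR_ge0 xs s m (fun i => proj1 (xs_range i))).
  pose proof (prod_range_ge0 xs Z (entry_time K M hl 0) (fun i => proj1 (xs_range i))).
  rewrite HW in Hq_le. nra.
Qed.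

End Estimates.

Ltac rewrite_slots := repeat match goal with H : nreg _ _ = slot _ _ |- _ => rewrite H end.
Ltac in_bounds :=
  apply forallb_forall; intros ? Hin; apply Nat.ltb_lt; cbn in Hin;
  repeat (destruct Hin as [<-|Hin]; [first [lia | rewrite_slots; apply slot_lt; lia] |]);
  contradiction.
Tactic Notation "step_by" tactic3(tac) :=
  eapply runs_trans; [eapply runs_step; [reflexivity | in_bounds | cbn; tac] |].
Tactic Notation "step" := step_by reflexivity.
Ltac decide_Rle := idtac; match goal with |- context [Rle_dec ?a ?b] =>
  destruct (Rle_dec a b); first [contradiction | exfalso; lra | reflexivity] end.
Ltac unchanged_regs := intros ?a ?Ha; cbn; unfold upd;
  repeat match goal with |- context [Nat.eqb ?x ?y] => destruct (Nat.eqb_spec x y); [lia|] end;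
  try split; reflexivity.
Ltac unchanged_slots := cbn -[Nat.eqb]; unfold upd;
  repeat (first [ progress (rewrite ?slot_eqb_r, ?slot_eqb_l by lia); cbn -[Nat.eqb]
                | match goal with |- context [Nat.eqb ?x ?y] =>
                    lazymatch y with context [Nat.eqb _ _] => fail | _ =>
                    lazymatch x with context [Nat.eqb _ _] => fail | _ =>
                    destruct (Nat.eqb_spec x y); try (exfalso; first [lia | congruence]) end end end ]);
  split; reflexivity.
Ltac exists_run H := match type of H with runs _ _ _ _ _ _ _ ?N => eexists; exists N end.

Lemma runs_advance_slot P x pc p M K j :
  (0 < K)%nat -> (p < 8)%nat -> p <> 6%nat ->
  nth_error P pc = Some (NAdd p p 5) ->
  nth_error P (S pc) = Some (NConst 6 (8 + K)) ->
  nth_error P (S (S pc)) = Some (NJle 6 p (pc + 4)) ->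
  nth_error P (S (S (S pc))) = Some (Jmp (pc + 5)) ->
  nth_error P (pc + 4) = Some (NConst p 8) ->
  nreg M 5 = 1%nat -> nreg M p = slot K j ->
  runs (8 + K) P x pc M (pc + 5) (setn (setn M p (slot K (j + 1))) 6 (8 + K)) 4.
Proof.
  intros HK Hp Hp6 I0 I1 I2 I3 I4 N5 Np.
  pose proof (slot_lt K HK j).
  assert (Hpp : (p =? p)%nat = true) by apply Nat.eqb_refl.
  assert (Hp6' : (p =? 6)%nat = false) by (apply Nat.eqb_neq; exact Hp6).
  pose proof (slot_succ K HK j) as Hnext.
  change 4%nat with (1 + (1 + (1 + (1 + 0))))%nat.
  eapply runs_trans; [eapply runs_step; [exact I0 | in_bounds | cbn; rewrite N5, Np; reflexivity] |].
  eapply runs_trans; [eapply runs_step; [exact I1 | in_bounds | reflexivity] |].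
  destruct (Nat.leb (8 + K) (slot K j + 1)) eqn:Hwrap.
  - eapply runs_trans; [eapply runs_step; [exact I2 | in_bounds |] |].
    { cbv [step setn upd]; cbn [nreg rreg Nat.eqb]. rewrite Hp6', Hpp, Hwrap. reflexivity. }
    eapply runs_mem_eq; [eapply runs_trans; [eapply runs_step; [exact I4 | in_bounds | reflexivity] |] |].
    + replace (S (pc + 4)) with (pc + 5)%nat by lia. apply runs_refl.
    + unfold setn. cbn. f_equal. extensionality i. unfold upd. rewrite Hnext.
      destruct (Nat.eqb_spec i p), (Nat.eqb_spec i 6); congruence.
  - eapply runs_trans; [eapply runs_step; [exact I2 | in_bounds |] |].
    { cbv [step setn upd]; cbn [nreg rreg Nat.eqb]. rewrite Hp6', Hpp, Hwrap. reflexivity. }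
    eapply runs_mem_eq; [eapply runs_trans; [eapply runs_step; [exact I3 | in_bounds | reflexivity] |] |].
    + apply runs_refl.
    + unfold setn. cbn. f_equal. extensionality i. unfold upd. rewrite Hnext.
      destruct (Nat.eqb_spec i p), (Nat.eqb_spec i 6); congruence.
Qed.

Section Simulation.
Variables (c : R) (m K : nat) (xs : nat -> R).
Hypothesis c_range : 0 < c < 1.
Hypothesis K_ge2 : (2 <= K)%nat.
Hypothesis xs_range : forall i, 0 <= xs i <= 1.

Local Notation P := (window_prog c m K).
Local Notation sp := (8 + K)%nat.
Local Notation inv := (window_inv c m K xs).
Local Notation state := (window_state c m K xs).

Lemma runs_start q M x :
  (q = O /\ M = mem0) \/ state true q M ->
  exists M' n, (n <= 9)%nat /\ runs sp P x 0 M 2 M' n /\ state true q M'.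
Proof.
  intros [[-> ->]|HI].
  - eassert (Hrun : runs sp P x 0 mem0 2 _ _).
    { do 9 step. apply runs_refl. }
    exists_run Hrun. split; [cbn; lia|]. split; [exact Hrun|].
    exists 0%nat, 1%nat, 0%nat.
    apply window_inv_restart; [exact c_range | lia | left; reflexivity | reflexivity ..].
  - pose proof HI as (hl & k & Z & HI').
    assert (Hinit : Nat.leb (nreg M 1) 0 = false).
    { apply Nat.leb_gt. rewrite (wi_head HI'). pose proof (slot_ge K hl). lia. }
    eassert (Hrun : runs sp P x 0 M 2 _ _).
    { step. step_by (rewrite Hinit; reflexivity). apply runs_refl. }
    exists_run Hrun. split; [cbn; lia|]. split; [exact Hrun|].
    eapply window_state_frame; [exact HI | unchanged_regs | unchanged_regs].
Qed.

Lemma runs_zero_input q M hl k Z :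
  inv true q M hl k Z -> xs q = 0 ->
  exists M' n, (n <= 30)%nat /\ runs sp P (xs q) 2 M 44 M' n /\ inv true (S q) M' 0 1 (S q).
Proof.
  intros HI Hx.
  eassert (Hrun : runs sp P (xs q) 2 M 44 _ _).
  { do 4 step. step_by decide_Rle. do 7 step. apply runs_refl. }
  exists_run Hrun. split; [cbn; lia|]. split; [exact Hrun|].
  apply window_inv_restart; [exact c_range | lia | right; rewrite Nat.sub_succ, Nat.sub_0_r; exact Hx
    | cbn; rewrite (wi_clock HI); lia | reflexivity | reflexivity | reflexivity
    | cbn; rewrite (wi_clock HI); lia | reflexivity | reflexivity].
Qed.

Lemma runs_absorb q M hl k Z :
  inv true q M hl k Z -> 0 < xs q ->
  entry_val K M hl (k - 1) * c <= rreg M 0 * xs q ->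
  exists M' n, (n <= 30)%nat /\ runs sp P (xs q) 2 M 29 M' n /\ inv false (S q) M' hl k Z.
Proof.
  intros HI Hx Hstay. pose proof (wi_tail HI) as Htail.
  eassert (Hrun : runs sp P (xs q) 2 M 29 _ _).
  { do 4 step. step_by decide_Rle. do 4 step.
    step_by (unfold upd; rewrite Htail, ?slot_eqb_l by lia; cbn; decide_Rle).
    apply runs_refl. }
  exists_run Hrun. split; [cbn; lia|]. split; [exact Hrun|].
  eapply window_inv_absorb; [exact Hx | exact HI | cbn; rewrite (wi_clock HI); lia
    | reflexivity .. | unchanged_regs | exact Hstay].
Qed.

Lemma runs_push q M hl k Z :
  inv true q M hl k Z -> 0 < xs q -> (k < K)%nat ->
  rreg M 0 * xs q < entry_val K M hl (k - 1) * c ->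
  exists M' n, (n <= 30)%nat /\ runs sp P (xs q) 2 M 29 M' n /\ inv false (S q) M' hl (S k) Z.
Proof.
  intros HI Hx Hk Hdrop.
  pose proof (wi_clock HI) as Hclock. pose proof (wi_tail HI) as Htail.
  pose proof (wi_size HI) as Hsize.
  assert (Hnotfull : Nat.leb K k = false) by (apply Nat.leb_gt; exact Hk).
  assert (Hnext : slot K (hl + (k - 1) + 1) = slot K (hl + k)).
  { f_equal. pose proof (wi_size_range HI). lia. }
  eassert (Hrun : runs sp P (xs q) 2 M 29 _ _).
  { unfold entry_val in Hdrop. do 4 step. step_by decide_Rle. do 4 step.
    step_by (unfold upd; rewrite Htail, ?slot_eqb_l by lia; cbn; decide_Rle).
    do 2 step. step_by (rewrite Hsize, Hnotfull; reflexivity). do 2 step.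
    eapply runs_trans; [apply (runs_advance_slot _ _ 22 2 _ K (hl + (k - 1)));
      first [lia | reflexivity | cbn; exact Htail] |].
    cbn [Nat.add]. do 2 step. apply runs_refl. }
  exists_run Hrun. split; [cbn; lia|]. split; [exact Hrun|].
  eapply window_inv_push;
    [exact c_range | exact xs_range | exact Hx | exact Hk | exact HI | .. | exact Hdrop].
  all: try (cbn; unfold upd; rewrite ?Hnext, ?Nat.eqb_refl, ?slot_eqb_r, ?slot_eqb_l by lia; cbn;
            first [reflexivity | rewrite ?Hclock, ?Hsize; lia]).
  intros a Ha Hne. rewrite <- Hnext in Hne. unchanged_slots.
Qed.

Lemma runs_push_evict q M hl Z :
  inv true q M hl K Z -> 0 < xs q ->
  rreg M 0 * xs q < entry_val K M hl (K - 1) * c ->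
  exists M' n, (n <= 30)%nat /\ runs sp P (xs q) 2 M 29 M' n /\ inv false (S q) M' (hl + 1) K Z.
Proof.
  intros HI Hx Hdrop.
  pose proof (wi_clock HI) as Hclock. pose proof (wi_tail HI) as Htail.
  pose proof (wi_size HI) as Hsize. pose proof (wi_head HI) as Hhead.
  assert (Hfull : Nat.leb K K = true) by apply Nat.leb_refl.
  assert (Hnext : slot K (hl + (K - 1) + 1) = slot K (hl + K)) by (f_equal; lia).
  eassert (Hrun : runs sp P (xs q) 2 M 29 _ _).
  { unfold entry_val in Hdrop. do 4 step. step_by decide_Rle. do 4 step.
    step_by (unfold upd; rewrite Htail, ?slot_eqb_l by lia; cbn; decide_Rle).
    do 2 step. step_by (rewrite Hsize, Hfull; reflexivity).
    eapply runs_trans; [apply (runs_advance_slot _ _ 17 1 _ K hl);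
      first [lia | reflexivity | cbn; exact Hhead] |].
    cbn [Nat.add].
    eapply runs_trans; [apply (runs_advance_slot _ _ 22 2 _ K (hl + (K - 1)));
      first [lia | reflexivity | cbn; exact Htail] |].
    cbn [Nat.add]. do 2 step. apply runs_refl. }
  exists_run Hrun. split; [cbn; lia|]. split; [exact Hrun|].
  eapply window_inv_push_evict;
    [exact c_range | exact xs_range | exact Hx | exact K_ge2 | exact HI | .. | exact Hdrop].
  all: try (cbn; unfold upd; rewrite ?Hnext, ?Nat.eqb_refl, ?slot_eqb_r, ?slot_eqb_l by lia; cbn;
            first [reflexivity | rewrite ?Hclock, ?Hsize; lia]).
  intros a Ha Hne. rewrite <- Hnext in Hne. unchanged_slots.
Qed.

Lemma runs_update q M :
  state true q M ->
  exists pc M' n, (n <= 30)%nat /\ runs sp P (xs q) 2 M pc M' n /\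
    (pc = 44%nat /\ state true (S q) M' \/ pc = 29%nat /\ state false (S q) M').
Proof.
  intros (hl & k & Z & HI).
  destruct (Rle_dec (xs q) 0) as [Hzero|Hpos].
  { destruct (runs_zero_input q M hl k Z HI) as (M' & n & Hn & Hrun & HI');
      [specialize (xs_range q); lra|].
    exists 44%nat, M', n. repeat split; [exact Hn | exact Hrun |]. left. split; [reflexivity|].
    exists 0%nat, 1%nat, (S q). exact HI'. }
  apply Rnot_le_lt in Hpos.
  assert (Hpush : exists hl' k', exists M' n, (n <= 30)%nat /\ runs sp P (xs q) 2 M 29 M' n /\
                                   inv false (S q) M' hl' k' Z).
  { destruct (Rle_dec (entry_val K M hl (k - 1) * c) (rreg M 0 * xs q)) as [Hstay|Hdrop].
    - exists hl, k. exact (runs_absorb q M hl k Z HI Hpos Hstay).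
    - apply Rnot_le_lt in Hdrop. pose proof (wi_size_range HI).
      destruct (Nat.lt_ge_cases k K) as [Hk|Hk].
      + exists hl, (S k). exact (runs_push q M hl k Z HI Hpos Hk Hdrop).
      + replace k with K in HI, Hdrop by lia.
        exists (hl + 1)%nat, K. exact (runs_push_evict q M hl Z HI Hpos Hdrop). }
  destruct Hpush as (hl' & k' & M' & n & Hn & Hrun & HI').
  exists 29%nat, M', n. repeat split; [exact Hn | exact Hrun |]. right. split; [reflexivity|].
  exists hl', k', Z. exact HI'.
Qed.

Lemma runs_expire q M x :
  state false q M ->
  exists M' n, (n <= 20)%nat /\ runs sp P x 29 M 44 M' n /\ state true q M'.
Proof.
  intros (hl & k & Z & HI).
  pose proof (wi_clock HI) as Hclock. pose proof (wi_head HI) as Hhead.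
  pose proof (wi_size HI) as Hsize. pose proof (wi_size_range HI).
  destruct (Nat.leb_spec k 1) as [Hk1|Hk2].
  { assert (Hsingle : Nat.leb (nreg M 3) 1 = true) by (apply Nat.leb_le; lia).
    eassert (Hrun : runs sp P x 29 M 44 _ _).
    { step. step_by (rewrite Hsingle; reflexivity). apply runs_refl. }
    exists_run Hrun. split; [cbn; lia|]. split; [exact Hrun|].
    exists hl, k, Z. eapply window_inv_frame;
      [apply window_inv_settle; [exact HI | left; lia] | unchanged_regs | unchanged_regs]. }
  assert (Hmany : Nat.leb (nreg M 3) 1 = false) by (apply Nat.leb_gt; lia).
  destruct (Nat.leb (nreg M (slot K (hl + 1)) + m) q) eqn:Hexp.
  - eassert (Hrun : runs sp P x 29 M 44 _ _).
    { step. step_by (rewrite Hmany; reflexivity). step.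
      eapply runs_trans; [apply (runs_advance_slot _ _ 32 4 _ K hl);
        first [lia | reflexivity | cbn; exact Hhead] |].
      cbn [Nat.add]. do 3 step.
      step_by (unfold upd at 1 2 3 4; rewrite !slot_eqb_l by lia; rewrite Hclock, Hexp; reflexivity).
      do 2 step. apply runs_refl. }
    exists_run Hrun. split; [cbn; lia|]. split; [exact Hrun|].
    exists (hl + 1)%nat, (k - 1)%nat, Z. apply Nat.leb_le in Hexp.
    eapply window_inv_pop; [exact HI | lia | exact Hexp | reflexivity .. | cbn; rewrite Hsize; reflexivity
      | reflexivity | unchanged_regs].
  - eassert (Hrun : runs sp P x 29 M 44 _ _).
    { step. step_by (rewrite Hmany; reflexivity). step.
      eapply runs_trans; [apply (runs_advance_slot _ _ 32 4 _ K hl);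
        first [lia | reflexivity | cbn; exact Hhead] |].
      cbn [Nat.add]. do 3 step.
      step_by (unfold upd at 1 2 3 4; rewrite !slot_eqb_l by lia; rewrite Hclock, Hexp; reflexivity).
      step. apply runs_refl. }
    exists_run Hrun. split; [cbn; lia|]. split; [exact Hrun|].
    exists hl, k, Z. apply Nat.leb_gt in Hexp.
    eapply window_inv_frame;
      [apply window_inv_settle; [exact HI | right; split; [lia | exact Hexp]]
      | unchanged_regs | unchanged_regs].
Qed.

Lemma exec_answer q M :
  state true q M ->
  exists o M' n, (n <= 10)%nat /\ (forall f x, exec (n + f) sp P x 44 M = Some (o, M')) /\
    state true q M' /\ ((m <= q)%nat -> answer_ok c (c ^ (K - 1)) xs q m o).
Proof.
  intros (hl & k & Z & HI).
  pose proof (wi_clock HI) as Hclock. pose proof (wi_head HI) as Hhead.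
  assert (Ht0 : entry_time K M hl 0 = nreg M (slot K hl))
    by (unfold entry_time; rewrite Nat.add_0_r; reflexivity).
  assert (Hv0 : entry_val K M hl 0 = rreg M (slot K hl))
    by (unfold entry_val; rewrite Nat.add_0_r; reflexivity).
  destruct (Nat.leb (nreg M (slot K hl) + m) q) eqn:Hold.
  - assert (Hk : (0 < k)%nat) by (pose proof (wi_size_range HI); lia).
    assert (Hv0_pos : 0 < rreg M (slot K hl)).
    { rewrite <- Hv0, (wi_val HI Hk). apply prod_range_gt0. intros i Hi.
      apply (wi_reset_pos HI). pose proof (wi_time_range HI Hk). lia. }
    eassert (Hrun : forall x, runs sp P x 44 M 51 _ _).
    { intros x. do 3 step. step_by (rewrite Hclock, Hhead, Hold; reflexivity). step.
      step_by (rewrite Hhead; destruct (Req_EM_T _ 0); [exfalso; lra | reflexivity]).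
      apply runs_refl. }
    match type of Hrun with forall x, runs _ _ _ _ _ _ _ ?N => eexists; eexists; exists (S N) end.
    split; [cbn; lia|]. split.
    { intros f x. rewrite Nat.add_succ_comm, (Hrun x).
      eapply exec_halt; [reflexivity | in_bounds | reflexivity]. }
    split; [exists hl, k, Z; eapply window_inv_frame; [exact HI | unchanged_regs ..] |].
    intros _. cbn. rewrite <- Hv0. eapply window_estimate; [exact xs_range | exact HI |].
    apply Nat.leb_le. congruence.
  - eassert (Hrun : forall x, runs sp P x 44 M 48 _ _).
    { intros x. do 3 step. step_by (rewrite Hclock, Hhead, Hold; reflexivity). apply runs_refl. }
    match type of Hrun with forall x, runs _ _ _ _ _ _ _ ?N => eexists; eexists; exists (S N) end.
    split; [cbn; lia|]. split.
    { intros f x. rewrite Nat.add_succ_comm, (Hrun x).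
      eapply exec_halt; [reflexivity | in_bounds | reflexivity]. }
    split; [exists hl, k, Z; eapply window_inv_frame; [exact HI | unchanged_regs ..] |].
    intros Hmq. eapply window_small; [exact c_range | exact xs_range | exact HI | exact Hmq |].
    apply Nat.leb_gt. congruence.
Qed.

(* An arrival costs at most 9 + 30 + 20 + 10 instructions. *)
Lemma exec_arrival q M :
  (q = O /\ M = mem0) \/ state true q M ->
  exists o M', exec 70 sp P (xs q) 0 M = Some (o, M') /\ state true (S q) M' /\
    ((m <= S q)%nat -> answer_ok c (c ^ (K - 1)) xs (S q) m o).
Proof.
  intros Hprev.
  destruct (runs_start q M (xs q) Hprev) as (M1 & n1 & Hn1 & Hrun1 & HI1).
  destruct (runs_update q M1 HI1) as (pc & M2 & n2 & Hn2 & Hrun2 & [[-> HI2] | [-> HI2]]).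
  - destruct (exec_answer (S q) M2 HI2) as (o & M' & n4 & Hn4 & Hexec & HI' & Hok).
    exists o, M'. split; [|split; assumption].
    replace 70%nat with (n1 + (n2 + (n4 + (70 - n1 - n2 - n4))))%nat by lia.
    rewrite Hrun1, Hrun2. apply Hexec.
  - destruct (runs_expire (S q) M2 (xs q) HI2) as (M3 & n3 & Hn3 & Hrun3 & HI3).
    destruct (exec_answer (S q) M3 HI3) as (o & M' & n4 & Hn4 & Hexec & HI' & Hok).
    exists o, M'. split; [|split; assumption].
    replace 70%nat with (n1 + (n2 + (n3 + (n4 + (70 - n1 - n2 - n3 - n4)))))%nat by lia.
    rewrite Hrun1, Hrun2, Hrun3. apply Hexec.
Qed.

Lemma run_window_prog q :
  (1 <= m)%nat ->
  exists o M, run 70 sp P xs q = Some (o, M) /\ ((q = O /\ M = mem0) \/ state true q M) /\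
    ((m <= q)%nat -> answer_ok c (c ^ (K - 1)) xs q m o).
Proof.
  intros Hm. induction q as [|q IH].
  - exists ResNone, mem0. split; [reflexivity|]. split; [left; split; reflexivity | lia].
  - destruct IH as (o & M & Hrun & Hprev & _).
    destruct (exec_arrival q M Hprev) as (o' & M' & Hexec & HI & Hok).
    exists o', M'. split; [cbn [run]; rewrite Hrun; exact Hexec | split; [right; exact HI | exact Hok]].
Qed.

End Simulation.

Lemma log_ratio_pos c z : 0 < c < 1 -> 1 < z -> 0 < ln z / ln (1 / c).
Proof.
  intros Hc Hz. apply Rdiv_lt_0_compat; rewrite <- ln_1; apply ln_increasing; try lra.
  rewrite Rdiv_1_l, <- Rinv_1. apply Rinv_lt_contravar; lra.
Qed.

Lemma buffer_size c z :
  0 < c < 1 -> 1 < z ->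
  exists K, (2 <= K)%nat /\ INR K <= 3 + ln z / ln (1 / c) /\ c ^ (K - 1) <= c / z.
Proof.
  intros Hc Hz. pose proof (log_ratio_pos c z Hc Hz) as Hr.
  set (r := ln z / ln (1 / c)) in *.
  destruct (archimed r) as [Hup1 Hup2].
  assert (Hup0 : (0 <= up r)%Z) by (apply le_IZR; simpl; lra).
  set (N := Z.to_nat (up r)).
  assert (HN : INR N = IZR (up r)) by (unfold N; rewrite INR_IZR_INZ, Z2Nat.id; auto).
  exists (2 + N)%nat. split; [lia|]. split.
  - rewrite plus_INR, HN. simpl. lra.
  - replace (2 + N - 1)%nat with (S N) by lia. simpl. unfold Rdiv.
    apply Rmult_le_compat_l; [lra|].
    rewrite <- Rdiv_1_l. apply pow_le_inv_of_log; [exact Hc | lra | fold r; lra].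
Qed.

Theorem lemma1 :
  exists C : R,
  forall (eps z : R) (m : nat),
    0 < eps < 1 -> 1 < z -> (1 <= m)%nat ->
    exists (P : list instr) (T sp : nat),
      INR T <= C /\
      INR sp <= C * (1 + ln z / ln (1 / (1 - eps))) /\
      forall xs : nat -> R,
        (forall i, 0 <= xs i <= 1) ->
        forall q : nat,
          run T sp P xs q <> None /\
          ((m <= q)%nat ->
           match run T sp P xs q with
           | Some (ResNum v, _) =>
               (1 - eps) * prodR xs (q - m) m <= v /\ v <= prodR xs (q - m) m
           | Some (ResNo, _) => prodR xs (q - m) m <= (1 - eps) / z
           | _ => False
           end).
Proof.
  exists 100. intros eps z m Heps Hz Hm.
  assert (Hc : 0 < 1 - eps < 1) by lra.
  destruct (buffer_size (1 - eps) z Hc Hz) as (K & HK & Hsize & Hpow).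
  pose proof (log_ratio_pos (1 - eps) z Hc Hz).
  exists (window_prog (1 - eps) m K), 70%nat, (8 + K)%nat.
  split; [simpl; lra|]. split; [rewrite plus_INR; simpl; lra|].
  intros xs Hxs q.
  destruct (run_window_prog (1 - eps) m K xs Hc HK Hxs q Hm) as (o & M & Hrun & _ & Hok).
  rewrite Hrun. split; [discriminate|]. intros Hmq.
  apply (answer_ok_weaken _ _ _ _ _ _ _ Hpow (Hok Hmq)).
Qed.
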